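(* If $H$ is a finite group with $H\ne1$, then $h^*(H^{\mathfrak{N}^*})=h^*(H)-1$.
   Context: $\mathfrak{N}^*$ is the formation of quasinilpotent groups and $H^{\mathfrak{N}^*}$ is the smallest normal subgroup of $H$ with quasinilpotent quotient. $h^*(G)$ is the generalized Fitting height: $\mathrm{F}^*_{(0)}(G)=1$, $\mathrm{F}^*_{(i+1)}(G)$ the full preimage of $\mathrm{F}^*(G/\mathrm{F}^*_{(i)}(G))$ where $\mathrm{F}^*$ is the generalized Fitting subgroup; $h^*(G)$ is the least $h$ with $\mathrm{F}^*_{(h)}(G)=G$. *)

From mathcomp Require Import all_boot all_fingroup all_solvable.
Set Implicit Arguments. Unset Strict Implicit. Unset Printing Implicit Defensive.
Import GroupScope.
Local Open Scope group_scope.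


Definition quasisimple {gT : finGroupType} (A : {set gT}) : bool := ([~: A, A] == A) && simple (A / 'Z(A)).

Definition component {gT : finGroupType} (K : {group gT}) (A : {set gT}) : bool := (K <|<| A) && quasisimple K.

Definition layer {gT : finGroupType} (A : {set gT}) : {set gT} := << \bigcup_(K : {group gT} | component K A) K >>.

Definition Fstar {gT : finGroupType} (A : {set gT}) : {set gT} := 'F(A) <*> layer A.

Definition quasinilpotent {gT : finGroupType} (A : {set gT}) : bool := Fstar A == A.

Definition Fstar_series {gT : finGroupType} (G : {set gT}) (i : nat) : {set gT} :=
  iter i (fun X => coset X @*^-1 Fstar (G / X)) 1.

(* generalized Fitting height: least h with F*_(h)(G) = G
   (such h exists and is at most #|G|, the series being strictly increasing) *)
Definition hstar {gT : finGroupType} (G : {set gT}) : nat :=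
  find (fun i => Fstar_series G i == G) (iota 0 #|G|.+1).

(* quasinilpotent residual H^{N*}: smallest normal subgroup with quasinilpotent
   quotient, i.e. the intersection of all such normal subgroups *)
Definition qn_residual {gT : finGroupType} (H : {set gT}) : {set gT} :=
  \bigcap_(N : {group gT} | (N <| H) && quasinilpotent (H / N)) N.

(* F*(N) = F*(G) :&: N for every normal subgroup N of G: a component of G either
   lies in N or centralises it, and the rest of F*(G) :&: N is a central extension
   of a nilpotent group. Hence F*_(i)(N) = F*_(i)(G) :&: N for all i.
   Quasinilpotent groups form a formation: if G/N1 and G/N2 are quasinilpotent,
   so is G/(N1 :&: N2). By induction this reduces to a minimal normal subgroup M
   meeting N trivially, where either G centralises M (a central extension), or M is
   nonabelian and G = M C_G(M) with both factors quasinilpotent normal subgroups.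
   So the residual R of H lies in a normal subgroup N iff H/N is quasinilpotent.
   With h = h*(H), H/F*_(h-1)(H) is quasinilpotent, so R <= F*_(h-1)(H), i.e.
   F*_(h-1)(R) = R; conversely F*_(m)(R) = R gives R <= F*_(m)(H), so that
   H/F*_(m)(H) is quasinilpotent and F*_(m+1)(H) = H. *)

From mathcomp Require Import all_boot all_fingroup all_solvable.
Import GroupScope.
Local Open Scope group_scope.
Set Implicit Arguments. Unset Strict Implicit. Unset Printing Implicit Defensive.

Lemma find_iota_leq (P : pred nat) n m :
  (forall i, P i -> P i.+1) -> P n -> (find P (iota 0 n.+1) <= m) = P m.
Proof.
move=> PS Pn; have upP i j : i <= j -> P i -> P j.
  by move/subnK <-; elim: (j - i) => //= k IHk /IHk/PS.
have hasPn : has P (iota 0 n.+1) by apply/hasP; exists n; rewrite // mem_iota add0n ltnSn.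
have ltkn : find P (iota 0 n.+1) < n.+1 by rewrite -[X in _ < X](size_iota 0) -has_find.
have := nth_find 0 hasPn; rewrite nth_iota // add0n => Pk.
apply/idP/idP => [lekm | Pm]; first exact: upP Pk.
rewrite leqNgt; apply/negP => ltmk.
by have := before_find 0 ltmk; rewrite nth_iota ?add0n ?Pm // (ltn_trans ltmk).
Qed.

Section Preliminaries.
Variable gT : finGroupType.
Implicit Types G H K L M N X Y : {group gT}.

Lemma perfect_commg_cent K N X :
  [~: K, K] = K -> [~: K, N] \subset X -> X \subset 'C(K) -> N \subset 'C(K).
Proof.
move=> perK sKNX cKX.
have KNK1 : [~: K, N, K] :=: 1 by apply/commG1P; apply: subset_trans sKNX cKX.
have NKK1 : [~: N, K, K] :=: 1 by rewrite (commGC N K).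
by have := three_subgroup KNK1 NKK1; rewrite perK => /commG1P; rewrite centsC.
Qed.

Lemma TI_normal_cents G H K : H <| G -> K <| G -> H :&: K = 1 -> H \subset 'C(K).
Proof.
move=> /andP[sHG nHG] /andP[sKG nKG] tiHK; apply/commG1P/trivgP; rewrite -tiHK.
by apply: commg_subI; rewrite subsetI subxx ?(subset_trans sHG nKG) ?(subset_trans sKG nHG).
Qed.

Lemma minnormal_sub_trivgVeq M G Y :
  minnormal M G -> G \subset 'N(Y) -> Y \subset M -> Y :=: 1 \/ Y :=: M.
Proof.
move=> /mingroupP[_ minM] nYG sYM.
have [-> | ntY] := eqVneq (Y : {set gT}) 1; [by left | right].
by apply: minM sYM; rewrite /= ntY.
Qed.

Lemma charsimple_nonabelian_center M : charsimple M -> ~~ abelian M -> 'Z(M) = 1.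
Proof.
case/charsimpleP=> _ chsimM nabM; apply/eqP; apply: contraR nabM => ntZ.
by rewrite -(chsimM _ ntZ (center_char M)) center_abelian.
Qed.

Lemma cosetpre_subnormal M (A B : {group coset_of M}) :
  A <|<| B -> coset M @*^-1 A <|<| coset M @*^-1 B.
Proof.
case/subnormalP => s chainAB <-{B}; apply/subnormalP.
elim: s A chainAB => [|C s IHs] A /=; first by exists [::].
case/andP => nsAC /IHs[t chainCt <-].
by exists ((coset M @*^-1 C)%G :: t); rewrite /= ?cosetpre_normal ?nsAC.
Qed.

Lemma commg_mul_central M (A B : {group gT}) :
  M \subset 'C(M) -> A \subset 'C(M) -> B \subset 'C(M) -> [~: M * A, M * B] = [~: A, B].
Proof.
move=> cMM cMA cMB.
have commMG_central (C K : {group gT}) :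
    C \subset 'C(M) -> K \subset 'C(M) -> [~: M * C, K] = [~: C, K].
  move=> cMC cMK; have MK1 : [~: M, K] = 1 by apply/commG1P; rewrite centsC.
  by rewrite commMG MK1 ?norms1 ?mul1g.
rewrite -(norm_joinEr (cents_norm cMB)) commMG_central //; last by rewrite join_subG cMM.
by rewrite commGC /= norm_joinEr ?(cents_norm cMB) // commMG_central // commGC.
Qed.

Lemma central_ext_nil H X :
  H \subset 'N(X) -> nilpotent (H / X) -> H :&: X \subset 'Z(H) -> nilpotent H.
Proof.
move=> nXH /lcnP[n LnHX1] sHXZ; apply/lcnP; exists n.+1.
have sLnX : 'L_n.+1(H) \subset X.
  rewrite -(quotient_sub1 (subset_trans (lcn_sub _ _) nXH)).
  by rewrite /quotient morphim_lcn // -/(quotient H X) LnHX1.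
rewrite lcnSn; apply/commG1P.
have sLnZ : 'L_n.+1(H) \subset 'Z(H) by rewrite (subset_trans _ sHXZ) // subsetI lcn_sub.
exact: subset_trans sLnZ (subsetIr _ _).
Qed.

Lemma subnormal_nil_Fitting L G : nilpotent L -> L <|<| G -> L \subset 'F(G).
Proof.
move=> nilL; elim: {G}_.+1 {-2}G (ltnSn #|G|) => // n IHn G leGn snLG.
have [defL | [K [snLK nsKG ltKG]]] := subnormalEr snLG.
  by rewrite Fitting_max // defL normal_refl.
have ltK : #|K| < n := leq_trans (proper_card ltKG) leGn.
apply: subset_trans (IHn K ltK snLK) _.
by rewrite Fitting_max ?Fitting_nil ?(char_normal_trans (Fitting_char K)).
Qed.

End Preliminaries.

Section Quasisimple.
Variable gT : finGroupType.
Implicit Types G K M N X : {group gT}.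

Lemma quasisimple_perfect K : quasisimple K -> [~: K, K] = K.
Proof. by case/andP=> /eqP. Qed.

Lemma quasisimple_neq1 K : quasisimple K -> K :!=: 1.
Proof.
case/andP=> _ /simpleP[ntKZ _]; apply: contra ntKZ => /eqP K1.
by rewrite -subG1 quotient_sub1 ?gFnorm // K1 sub1G.
Qed.

Lemma quasisimple_nonnil K : quasisimple K -> ~~ nilpotent K.
Proof.
move=> qsK; apply/negP => /nilpotent_sol solK.
have := sol_der1_proper solK (subxx K) (quasisimple_neq1 qsK).
by rewrite derg1 quasisimple_perfect ?properxx.
Qed.

Lemma quasisimple_normal K M : quasisimple K -> M <| K -> M \subset 'Z(K) \/ M :=: K.
Proof.
move=> qsK nsMK; have [sMK nMK] := andP nsMK.
have [sMZ | nsMZ] := boolP (M \subset 'Z(K)); [by left | right].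
have [_ /simpleP[_ simKZ]] := andP qsK.
have nZM : M \subset 'N('Z(K)) := subset_trans sMK (gFnorm _ K).
have [/trivgP | /= defKZ] := simKZ _ (quotient_normal 'Z(K) nsMK).
  by rewrite quotient_sub1 // (negPf nsMZ).
apply/eqP; rewrite eqEsubset sMK -(quasisimple_perfect qsK) -/(K^`(1)) der1_min //.
have sKMZ : K \subset 'Z(K) * M by rewrite -quotientK // defKZ -sub_morphim_pre ?gFnorm.
apply: abelianS (quotientS M sKMZ) _.
by rewrite quotientMidr quotient_abelian ?center_abelian.
Qed.

Lemma quasisimpleP K :
  reflect [/\ K :!=: 1, [~: K, K] = K & forall M, M <| K -> M :!=: K -> M \subset 'Z(K)]
          (quasisimple K).
Proof.
apply: (iffP idP) => [qsK | [ntK perK centM]].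
  split=> [||M nsMK]; rewrite ?quasisimple_neq1 ?quasisimple_perfect //.
  by have [// | ->] := quasisimple_normal qsK nsMK; rewrite eqxx.
apply/andP; split; first by rewrite perK.
apply/simpleP; split.
  apply: contra ntK; rewrite -subG1 quotient_sub1 ?gFnorm // => sKZ.
  by move/commG1P: (abelianS sKZ (center_abelian K)); rewrite perK => ->.
move=> Mb nsMb; have [M -> sZM nsMK] := inv_quotientN (center_normal K) nsMb.
have [-> | neMK] := eqVneq (M : {set gT}) K; [by right | left].
by apply/trivgP; rewrite quotient_sub1 ?centM ?(subset_trans (normal_sub nsMK)) ?gFnorm.
Qed.

Lemma quasisimple_subnormal_subVcent K G N :
  quasisimple K -> K <|<| G -> N <| G -> K \subset N \/ N \subset 'C(K).
Proof.
move=> qsK; have perK := quasisimple_perfect qsK.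
elim: {G}_.+1 {-2}G (ltnSn #|G|) N => // n IHn G leGn N snKG nsNG.
have [sKG sNG] := (subnormal_sub snKG, normal_sub nsNG).
have [defK | [M [snKM nsMG ltMG]]] := subnormalEr snKG.
  have nsKNK : K :&: N <| K := normalGI sKG nsNG.
  have [sKNZ | defKN] := quasisimple_normal qsK nsKNK; last first.
    by left; rewrite -defKN subsetIr.
  right; apply: perfect_commg_cent perK _ (subset_trans sKNZ (subsetIr _ _)).
  apply: commg_subI; first by rewrite subsetI subxx (subset_trans sKG) ?normal_norm.
  by rewrite subsetI subxx defK (subset_trans sNG) ?normG.
have ltM : #|M| < n := leq_trans (proper_card ltMG) leGn.
have [sKMN | cKMN] := IHn M ltM (M :&: N)%G snKM (normalGI (proper_sub ltMG) nsNG).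
  by left; apply: subset_trans sKMN (subsetIr M N).
right; apply: perfect_commg_cent perK _ cKMN.
apply: commg_subI.
  by rewrite subsetI (subnormal_sub snKM) (subset_trans sKG) ?normal_norm.
by rewrite subsetI subxx (subset_trans sNG) ?normal_norm.
Qed.

End Quasisimple.

Section LayerFstar.
Variable gT : finGroupType.
Implicit Types (A : {set gT}) (G K X : {group gT}).

Lemma Fstar_group_set A : group_set (Fstar A). Proof. exact: groupP. Qed.
Canonical Fstar_group A := Group (Fstar_group_set A).

Lemma component_sub K G : component K G -> K \subset G.
Proof. by case/andP=> /subnormal_sub. Qed.

Lemma component_sub_layer K G : component K G -> K \subset layer G.
Proof. by move=> compK; rewrite sub_gen // (bigcup_sup K). Qed.

Lemma layer_min G X : (forall K, component K G -> K \subset X) -> layer G \subset X.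
Proof. by move=> sKX; rewrite gen_subG; apply/bigcupsP. Qed.

Lemma layer_sub G : layer G \subset G.
Proof. by apply: layer_min => K /component_sub. Qed.

Lemma Fitting_sub_Fstar G : 'F(G) \subset Fstar G.
Proof. exact: joing_subl. Qed.

Lemma layer_sub_Fstar G : layer G \subset Fstar G.
Proof. exact: joing_subr. Qed.

Lemma Fstar_min G X : 'F(G) \subset X -> layer G \subset X -> Fstar G \subset X.
Proof. by move=> sFX sEX; rewrite join_subG sFX. Qed.

Lemma Fstar_sub G : Fstar G \subset G.
Proof. by rewrite Fstar_min ?Fitting_sub ?layer_sub. Qed.

End LayerFstar.

Section MorphimFstar.
Variables (aT rT : finGroupType) (D : {group aT}) (f : {morphism D >-> rT}).
Implicit Types G K : {group aT}.

Lemma morphim_quasisimple K :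
  K \subset D -> quasisimple K -> f @* K :=: 1 \/ quasisimple (f @* K).
Proof.
move=> sKD qsK; have [-> | ntfK] := eqVneq (f @* K) 1; [by left | right].
apply/quasisimpleP; split=> //; first by rewrite -morphimR // quasisimple_perfect.
move=> Mb nsMb neMb.
have sKfK : K \subset f @*^-1 (f @* K) by rewrite -sub_morphim_pre.
have nsMK : K :&: f @*^-1 Mb <| K.
  apply: normalGI sKfK _; rewrite morphpre_normal ?morphimS //.
  by rewrite (subset_trans (normal_sub nsMb)) ?morphimS.
have defMb : f @* (K :&: f @*^-1 Mb) = Mb.
  by rewrite morphim_setIpre; apply/setIidPr/normal_sub.
have [sMZ | defM] := quasisimple_normal qsK nsMK; last first.
  by move: neMb; rewrite -defMb defM eqxx.
by rewrite -defMb (subset_trans (morphimS f sMZ)) ?morphim_center.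
Qed.

Lemma morphim_component K G :
  G \subset D -> component K G -> f @* K :=: 1 \/ component (f @* K)%G (f @* G).
Proof.
move=> sGD /andP[snKG qsK].
have [-> | qsfK] := morphim_quasisimple (subset_trans (subnormal_sub snKG) sGD) qsK.
  by left.
by right; rewrite /component qsfK andbT morphim_subnormal.
Qed.

Lemma morphim_layer G : G \subset D -> f @* layer G \subset layer (f @* G).
Proof.
move=> sGD; rewrite (sub_morphim_pre f _ (subset_trans (layer_sub G) sGD)).
apply: layer_min => K compK.
rewrite -sub_morphim_pre ?(subset_trans (component_sub compK)) //.
by have [-> | /component_sub_layer] := morphim_component sGD compK; rewrite ?sub1G.
Qed.

End MorphimFstar.

Lemma morphim_Fstar : GFunctor.continuous (@Fstar).
Proof.
move=> gT rT G f; rewrite sub_morphim_pre ?Fstar_sub //.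
apply: Fstar_min; rewrite -sub_morphim_pre ?Fitting_sub ?layer_sub //.
  exact: subset_trans (morphim_Fitting G f) (Fitting_sub_Fstar _).
exact: subset_trans (morphim_layer f (subxx G)) (layer_sub_Fstar _).
Qed.

Canonical Fstar_igFun := [igFun by Fstar_sub & morphim_Fstar].
Canonical Fstar_gFun := [gFun by morphim_Fstar].

Section MorphimQuasinil.
Variables (aT rT : finGroupType) (D G : {group aT}) (f : {morphism D >-> rT}).

Lemma morphim_quasinil : G \subset D -> quasinilpotent G -> quasinilpotent (f @* G).
Proof.
move=> sGD /eqP FG; rewrite /quasinilpotent eqEsubset Fstar_sub /=.
by rewrite -{1}FG (morphimF _ f sGD).
Qed.

Lemma injm_quasinil :
  'injm f -> G \subset D -> quasinilpotent (f @* G) = quasinilpotent G.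
Proof.
move=> injf sGD; rewrite /quasinilpotent -(injmF _ injf sGD).
by rewrite !eqEsubset !injmSK ?gFsub_trans ?Fstar_sub.
Qed.

End MorphimQuasinil.

Section NormalFstar.
Variable gT : finGroupType.
Implicit Types A D G L N Q : {group gT}.

Lemma layer_cent_Fitting G : layer G \subset 'C('F(G)).
Proof.
apply: layer_min => K /andP[snKG qsK]; rewrite centsC.
have [sKF | //] := quasisimple_subnormal_subVcent qsK snKG (Fitting_normal G).
by case/negP: (quasisimple_nonnil qsK); apply: nilpotentS sKF (Fitting_nil G).
Qed.

Lemma layer_sub_normal_cent G N : N <| G -> layer G \subset layer N <*> 'C_G(N).
Proof.
move=> nsNG; apply: layer_min => K compK; have /andP[snKG qsK] := compK.
have [sKN | cNK] := quasisimple_subnormal_subVcent qsK snKG nsNG.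
  apply: subset_trans (joing_subl _ _); apply: component_sub_layer.
  have := setI_subnormal (normal_sub nsNG) snKG.
  by rewrite (setIidPl sKN) /component qsK andbT.
by apply: subset_trans (joing_subr _ _); rewrite subsetI (component_sub compK) centsC.
Qed.

Lemma Fstar_normalS G N : N <| G -> Fstar N \subset Fstar G.
Proof.
move=> nsNG; apply: Fstar_min.
  apply: subset_trans (Fitting_sub_Fstar G).
  by rewrite Fitting_max ?Fitting_nil ?(char_normal_trans (Fitting_char N)).
apply: subset_trans (layer_sub_Fstar G).
apply: layer_min => K /andP[snKN qsK]; apply: component_sub_layer.
by rewrite /component qsK (subnormal_trans snKN) ?normal_subnormal.
Qed.

Lemma Fitting_subcent_normalI_sub G N : N <| G -> ('F(G) <*> 'C_G(N)) :&: N \subset 'F(N).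
Proof.
move=> nsNG; have [sNG nNG] := andP nsNG.
have nsCG : 'C_G(N) <| G := normalGI nNG (cent_normal N).
have nsWG : 'F(G) <*> 'C_G(N) <| G by rewrite normalY ?Fitting_normal.
apply: Fitting_max; first exact: normalS (subsetIr _ _) sNG (normalI nsWG nsNG).
have nCWN : ('F(G) <*> 'C_G(N)) :&: N \subset 'N('C_G(N)).
  exact: subset_trans (subsetIr _ _) (subset_trans sNG (normal_norm nsCG)).
apply: central_ext_nil nCWN _ _.
  apply: nilpotentS (quotientS _ (subsetIl _ _)) _.
  rewrite /= norm_joinEr ?(subset_trans (normal_sub nsCG)) ?gFnorm //.
  by rewrite quotientMidr quotient_nil ?Fitting_nil.
rewrite subsetI subsetIl /= (subset_trans (subsetIr _ _)) //.
by rewrite (subset_trans (subsetIr G _)) ?centS ?subsetIr.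
Qed.

Lemma Fstar_normalI G N : N <| G -> Fstar N = Fstar G :&: N.
Proof.
move=> nsNG; apply/eqP; rewrite eqEsubset subsetI Fstar_normalS // Fstar_sub /=.
have [sNG nNG] := andP nsNG.
set W := 'F(G) <*> 'C_G(N).
have nsWG : W <| G.
  by rewrite normalY ?Fitting_normal ?(normalGI nNG (cent_normal N)).
have nWE : layer N \subset 'N(W).
  exact: subset_trans (layer_sub N) (subset_trans sNG (normal_norm nsWG)).
have sFstarEW : Fstar G \subset layer N * W.
  rewrite -(norm_joinEl nWE); apply: Fstar_min.
    exact: subset_trans (joing_subl _ _) (joing_subr _ _).
  apply: subset_trans (layer_sub_normal_cent nsNG) _.
  by rewrite join_subG joing_subl (subset_trans (joing_subr _ _) (joing_subr _ _)).
apply: subset_trans (setSI N sFstarEW) _.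
rewrite -group_modl ?layer_sub // mul_subG ?layer_sub_Fstar //.
exact: subset_trans (Fitting_subcent_normalI_sub nsNG) (Fitting_sub_Fstar N).
Qed.

Lemma quasinil_normal G N : quasinilpotent G -> N <| G -> quasinilpotent N.
Proof.
move=> /eqP FG nsNG; rewrite /quasinilpotent (Fstar_normalI nsNG) FG.
by rewrite (setIidPr (normal_sub nsNG)).
Qed.

Lemma quasinil_sub_Fstar Q G : Q <| G -> quasinilpotent Q -> Q \subset Fstar G.
Proof. by move=> nsQG /eqP FQ; rewrite -{1}FQ Fstar_normalS. Qed.

Lemma trivg_Fstar G : (Fstar G == 1) = (G :==: 1).
Proof.
apply/idP/idP => [FG1 | /eqP->]; last by rewrite -subG1 Fstar_sub.
apply/negPn/negP => ntG.
have [L minL] :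
    {L : {group gT} | mingroup L [pred X : {group gT} | (X :!=: 1) && (X <|<| G)]}.
  by apply: ex_mingroup; exists G; rewrite /= ntG subnormal_refl.
have [/andP[ntL snLG] minLP] := mingroupP minL.
have simL (Y : {group gT}) : Y <| L -> Y :=: 1 \/ Y :=: L.
  have [-> _ | ntY nsYL] := eqVneq (Y : {set gT}) 1; [by left | right].
  apply: minLP (normal_sub nsYL).
  by rewrite /= ntY (subnormal_trans (normal_subnormal nsYL)).
suff sLF : L \subset Fstar G by case/negP: ntL; rewrite -subG1 -(eqP FG1).
have [abL | nabL] := boolP (abelian L).
  exact: subset_trans (subnormal_nil_Fitting (abelian_nil abL) snLG) (Fitting_sub_Fstar G).
apply: subset_trans (layer_sub_Fstar G); apply: component_sub_layer.
have perL : [~: L, L] = L.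
  have [/commG1P abL | //] := simL _ (der_normal 1 L).
  by case/negP: nabL.
rewrite /component snLG /=; apply/quasisimpleP; split=> // Y nsYL neYL.
have [-> | defY] := simL Y nsYL; first exact: sub1G.
by rewrite defY eqxx in neYL.
Qed.

Lemma quasinil_abelian_commg_proper D A :
  quasinilpotent D -> A <| D -> abelian A -> A :!=: 1 -> [~: A, D] \proper A.
Proof.
move=> /eqP FD nsAD abA ntA; have [sAD nAD] := andP nsAD.
have sAF : A \subset 'F(D) := Fitting_max nsAD (abelian_nil abA).
have nFE : layer D \subset 'N('F(D)) := subset_trans (layer_sub D) (gFnorm _ D).
have cEA : layer D \subset 'C(A) := subset_trans (layer_cent_Fitting D) (centS sAF).
have -> : [~: A, D] = [~: A, 'F(D)].
  rewrite -{1}FD /Fstar norm_joinEr // commGC commMG; last first.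
    by rewrite normsR // (subset_trans (layer_sub D)).
  by rewrite (commG1P cEA) mulg1 commGC.
apply: nil_comm_properl (Fitting_nil D) sAF ntA _.
by rewrite subsetI subxx (subset_trans (Fitting_sub D)).
Qed.

End NormalFstar.

Section QuasinilQuotient.
Variable gT : finGroupType.
Implicit Types G K L M N X : {group gT}.

Lemma quasinil1 : quasinilpotent [1 gT].
Proof. by rewrite /quasinilpotent eqEsubset Fstar_sub sub1G. Qed.

Lemma quasinil_quotient_third G L X :
  L \subset X -> L <| G -> X <| G ->
  quasinilpotent (G / X) -> quasinilpotent (G / L / (X / L)).
Proof.
move=> sLX nsLG nsXG; have [f injf imf] := third_isom sLX nsLG nsXG.
by rewrite -(injm_quasinil injf (subxx _)) imf.
Qed.

Lemma quasinil_quotientS G N X :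
  N \subset X -> N <| G -> X <| G ->
  quasinilpotent (G / N) -> quasinilpotent (G / X).
Proof.
move=> sNX nsNG nsXG qnGN; have [f injf imf] := third_isom sNX nsNG nsXG.
by rewrite -(imf G) // injm_quasinil // morphim_quasinil ?quotient_norms ?normal_norm.
Qed.

Lemma quasinil_quotient_TI G N :
  G \subset 'N(N) -> N :&: G = 1 -> quasinilpotent (G / N) -> quasinilpotent G.
Proof.
move=> nNG tiNG; have [injf imf] := isomP (quotient_isom nNG tiNG).
by rewrite -(injm_quasinil injf (subxx G)) imf.
Qed.

Lemma central_ext_quasisimple K M :
  M \subset K -> K \subset 'C(M) -> quasisimple (K / M) -> quasisimple [~: K, K].
Proof.
move=> sMK cMK qsKM; set L := [~: K, K].
have nMK : K \subset 'N(M) := cents_norm cMK.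
have sLK : L \subset K := der1_subG K.
have nML := subset_trans sLK nMK.
have cML : L \subset 'C(M) := subset_trans sLK cMK.
have defLM : L / M = K / M by rewrite quotientR // quasisimple_perfect.
have defK : K :=: M * L.
  by rewrite -quotientK // defLM quotientGK // /normal sMK.
have perL : [~: L, L] = L by rewrite {3}/L {1 2}defK commg_mul_central ?(subset_trans sMK).
apply/quasisimpleP; split=> // [|X nsXL neXL].
  by apply: contra (quasisimple_neq1 qsKM) => /eqP L1; rewrite /= -defLM /L L1 quotient1.
have [sXL nXL] := andP nsXL; have nMX := subset_trans sXL nML.
have nsXMK : X / M <| K / M by rewrite -defLM quotient_normal.
have [sXMZ | defXM] := quasisimple_normal qsKM nsXMK.
  rewrite subsetI sXL /=; apply: (perfect_commg_cent (X := M) perL); last by rewrite centsC.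
  by rewrite commGC -quotient_cents2 // defLM (subset_trans sXMZ) ?subsetIr.
have sLMX : L \subset M * X by rewrite -quotientK // defXM /= -defLM -sub_morphim_pre.
case/negP: neXL; rewrite eqEsubset sXL /= -/L -{1}perL.
apply: subset_trans (commgSS sLMX sLMX) _.
rewrite commg_mul_central ?(subset_trans sXL cML) ?(subset_trans sMK) //.
by rewrite commg_subl normG.
Qed.

Section CentralExtension.
Variables G M : {group gT}.
Hypotheses (nsMG : M <| G) (cMG : G \subset 'C(M)).

Lemma quotient_Fitting_central : 'F(G / M) \subset 'F(G) / M.
Proof.
have [sMG nMG] := andP nsMG; set P := coset M @*^-1 'F(G / M).
have nsPG : P <| G by rewrite -{1}(quotientGK nsMG) cosetpre_normal Fitting_normal.
have nilP : nilpotent P.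
  apply: central_ext_nil (subset_trans (normal_sub nsPG) nMG) _ _.
    by rewrite cosetpreK Fitting_nil.
  rewrite subsetI subsetIl (subset_trans (subsetIr _ _)) //.
  by rewrite centsC (subset_trans (normal_sub nsPG) cMG).
by rewrite -(cosetpreK 'F(G / M)) quotientS ?Fitting_max.
Qed.

Lemma quotient_layer_central : layer (G / M) \subset layer G / M.
Proof.
have [sMG nMG] := andP nsMG.
apply: layer_min => Kb /andP[snKbG qsKb].
set K := coset M @*^-1 Kb.
have snKG : K <|<| G by rewrite -(quotientGK nsMG) cosetpre_subnormal.
have sKG := subnormal_sub snKG.
have qsKM : quasisimple (K / M) by rewrite cosetpreK.
have qsL := central_ext_quasisimple (sub_cosetpre _) (subset_trans sKG cMG) qsKM.
have compL : component [~: K, K] G.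
  by rewrite /component qsL (subnormal_trans _ snKG) // normal_subnormal ?(der_normal 1).
have defKb : [~: K, K] / M = Kb.
  by rewrite quotientR ?(subset_trans sKG nMG) // cosetpreK quasisimple_perfect.
by rewrite -defKb quotientS ?component_sub_layer.
Qed.

Lemma quasinil_central_ext : quasinilpotent (G / M) -> quasinilpotent G.
Proof.
move=> /eqP FGM; have [sMG nMG] := andP nsMG.
have sMF : M \subset Fstar G.
  apply: subset_trans (Fitting_sub_Fstar G).
  exact: Fitting_max nsMG (abelian_nil (subset_trans sMG cMG)).
rewrite /quasinilpotent eqEsubset Fstar_sub -(quotientSGK nMG sMF) -{1}FGM.
apply: Fstar_min.
  exact: subset_trans quotient_Fitting_central (quotientS _ (Fitting_sub_Fstar G)).
exact: subset_trans quotient_layer_central (quotientS _ (layer_sub_Fstar G)).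
Qed.

End CentralExtension.

End QuasinilQuotient.

Section MinimalNormalExtension.
Variable gT : finGroupType.
Implicit Types G M N : {group gT}.

Lemma minnormal_abelian_cent G M N :
  M <| G -> minnormal M G -> abelian M -> N <| G -> M :&: N = 1 ->
  quasinilpotent (G / N) -> G \subset 'C(M).
Proof.
move=> nsMG minMG abM nsNG tiMN qnGN; have [sMG nMG] := andP nsMG.
have nNM := subset_trans sMG (normal_norm nsNG).
have sMGM : [~: M, G] \subset M by rewrite commg_subl.
have [/commG1P | defMG] := minnormal_sub_trivgVeq minMG (normsR nMG (normG G)) sMGM.
  by rewrite centsC.
have ntMN : M / N != 1.
  have [/andP[ntM _] _] := mingroupP minMG; apply: contraNneq ntM => /trivgP MN1.
  by rewrite -tiMN eq_sym; apply/eqP/setIidPl; rewrite -quotient_sub1.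
have := quasinil_abelian_commg_proper qnGN (quotient_normal N nsMG)
  (quotient_abelian N abM) ntMN.
by rewrite -quotientR ?(normal_norm nsNG) // (defMG : [~: M, G] = M) properxx.
Qed.

Lemma quotient_subcent_TI G M N :
  M <| G -> N <| G -> M :&: N = 1 -> 'C_(G / N)(M / N) \subset 'C_G(M) / N.
Proof.
move=> nsMG nsNG tiMN; have [sMG nMG] := andP nsMG; have [sNG nNG] := andP nsNG.
set Y := coset N @*^-1 'C_(G / N)(M / N).
have sYG : Y \subset G by rewrite -(quotientGK nsNG) morphpreS ?subsetIl.
have cYM : Y \subset 'C(M).
  apply/commG1P/trivgP; rewrite -tiMN subsetI commg_subr (subset_trans sYG nMG).
  rewrite -quotient_cents2 ?(subset_trans sYG nNG) ?(subset_trans sMG nNG) //.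
  by rewrite cosetpreK subsetIr.
by rewrite -(cosetpreK 'C_(G / N)(M / N)) quotientS // subsetI sYG.
Qed.

Lemma minnormal_nonabelian_sub_joing_cent G M N :
  M <| G -> minnormal M G -> ~~ abelian M -> N <| G -> M :&: N = 1 ->
  quasinilpotent (G / N) -> G \subset M <*> 'C_G(M).
Proof.
move=> nsMG minMG nabM nsNG tiMN /eqP FGN.
have [sMG nMG] := andP nsMG; have [sNG nNG] := andP nsNG.
have [/andP[ntM _] _] := mingroupP minMG.
have ZM1 := charsimple_nonabelian_center (minnormal_charsimple minMG) nabM.
set P := coset N @*^-1 'F(G / N).
have nsPG : P <| G by rewrite -{1}(quotientGK nsNG) cosetpre_normal Fitting_normal.
have tiMP : M :&: P = 1.
  have nMPG : G \subset 'N(M :&: P) := normsI nMG (normal_norm nsPG).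
  have [// | /setIidPl sMP] := minnormal_sub_trivgVeq minMG nMPG (subsetIl _ _).
  have nilM : nilpotent M.
    apply: central_ext_nil (subset_trans sMG nNG) _ _; last by rewrite tiMN sub1G.
    by apply: nilpotentS (Fitting_nil (G / N)); rewrite -(cosetpreK 'F(G / N)) quotientS.
  by move/eqP: ZM1; rewrite center_nil_eq1 // (negPf ntM).
have cPM : P \subset 'C(M) by rewrite (TI_normal_cents nsPG nsMG) // setIC.
have sNC : N \subset 'C_G(M).
  by rewrite subsetI sNG (TI_normal_cents nsNG nsMG) // setIC.
rewrite -(quotientSGK nNG (subset_trans sNC (joing_subr _ _))) -{1}FGN.
apply: Fstar_min.
  rewrite -(cosetpreK 'F(G / N)) quotientS // (subset_trans _ (joing_subr _ _)) //.
  by rewrite subsetI (normal_sub nsPG).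
apply: subset_trans (layer_sub_normal_cent (quotient_normal N nsMG)) _.
rewrite join_subG (subset_trans (layer_sub _)) ?quotientS ?joing_subl //=.
exact: subset_trans (quotient_subcent_TI nsMG nsNG tiMN) (quotientS _ (joing_subr _ _)).
Qed.

Lemma quasinil_minnormal_ext G M N :
  M <| G -> minnormal M G -> N <| G -> M :&: N = 1 ->
  quasinilpotent (G / M) -> quasinilpotent (G / N) -> quasinilpotent G.
Proof.
move=> nsMG minMG nsNG tiMN qnGM qnGN; have [sMG nMG] := andP nsMG.
have [abM | nabM] := boolP (abelian M).
  have cMG := minnormal_abelian_cent nsMG minMG abM nsNG tiMN qnGN.
  exact: quasinil_central_ext nsMG cMG qnGM.
have nsCG : 'C_G(M) <| G := normalGI nMG (cent_normal M).
have sMF : M \subset Fstar G.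
  apply: (quasinil_sub_Fstar nsMG).
  apply: quasinil_quotient_TI (subset_trans sMG (normal_norm nsNG)) _ _.
    by rewrite setIC.
  exact: quasinil_normal qnGN (quotient_normal N nsMG).
have sCF : 'C_G(M) \subset Fstar G.
  apply: (quasinil_sub_Fstar nsCG).
  apply: quasinil_quotient_TI (subset_trans (normal_sub nsCG) nMG) _ _.
    rewrite setIA (setIidPl sMG).
    exact: charsimple_nonabelian_center (minnormal_charsimple minMG) nabM.
  exact: quasinil_normal qnGM (quotient_normal M nsCG).
rewrite /quasinilpotent eqEsubset Fstar_sub /=.
have sGMC := minnormal_nonabelian_sub_joing_cent nsMG minMG nabM nsNG tiMN qnGN.
by rewrite (subset_trans sGMC) // join_subG sMF.
Qed.

End MinimalNormalExtension.

Section Formation.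
Variable gT : finGroupType.
Implicit Types G N : {group gT}.

Lemma quasinil_quotientI G N1 N2 :
  N1 <| G -> N2 <| G -> quasinilpotent (G / N1) -> quasinilpotent (G / N2) ->
  quasinilpotent (G / (N1 :&: N2)).
Proof.
move=> + nsN2G + qnGN2; have [sN2G nN2G] := andP nsN2G.
elim: {N1}_.+1 {-2}N1 (ltnSn #|N1|) => // n IHn N1 leN1n nsN1G qnGN1.
have [sN1G nN1G] := andP nsN1G.
have [sN12 | nsN12] := boolP (N1 \subset N2); first by rewrite (setIidPl sN12).
have [L maxL] : {L : {group gT} | maxgroup L
    [pred Y : {group gT} | [&& Y <| G, N1 :&: N2 \subset Y & Y \proper N1]]}.
  apply: ex_maxgroup; exists (N1 :&: N2)%G.
  by rewrite /= normalI // subxx properE subsetIl subsetI subxx.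
have [/and3P[nsLG sN12L ltLN1] maxLP] := maxgroupP maxL.
have [sLG nLG] := andP nsLG; have sLN1 := proper_sub ltLN1.
have tiLN2 : L :&: N2 = N1 :&: N2.
  by apply/eqP; rewrite eqEsubset setSI // subsetI sN12L subsetIr.
suff qnGL : quasinilpotent (G / L).
  by rewrite -tiLN2 IHn // (leq_trans (proper_card ltLN1)).
have minN1L : minnormal (N1 / L) (G / L).
  apply: maxnormal_minnormal; rewrite ?(subset_trans sN1G nLG) //.
  rewrite /maxnormal; apply/maxgroupP.
  split => [|Y /andP[ltYN1 nYG] sLY]; first by rewrite ltLN1.
  apply: (maxLP Y _ sLY); rewrite /= ltYN1 (subset_trans sN12L sLY) andbT.
  by rewrite /normal nYG (subset_trans (proper_sub ltYN1)).
apply: (quasinil_minnormal_ext (M := (N1 / L)%G) (N := (N2 / L)%G)).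
- by rewrite quotient_normal.
- exact: minN1L.
- by rewrite quotient_normal.
- by rewrite -quotientGI // quotientS1.
- exact: quasinil_quotient_third sLN1 nsLG nsN1G qnGN1.
- have defN2L : N2 / L = (N2 <*> L) / L by rewrite quotientYidr ?(subset_trans sN2G nLG).
  rewrite /= defN2L.
  apply: (quasinil_quotient_third (joing_subr _ _) nsLG (normalY nsN2G nsLG)).
  exact: quasinil_quotientS (joing_subl _ _) nsN2G (normalY nsN2G nsLG) qnGN2.
Qed.

End Formation.

Section FstarSeries.
Variable gT : finGroupType.
Implicit Types (A : {set gT}) (G N X : {group gT}).

Lemma Fstar_seriesS A i :
  Fstar_series A i.+1 = coset (Fstar_series A i) @*^-1 Fstar (A / Fstar_series A i).
Proof. by []. Qed.

Lemma Fstar_series_group_set A i : group_set (Fstar_series A i).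
Proof.
by case: i => [|i]; [exact: group_set_one | rewrite Fstar_seriesS; exact: groupP].
Qed.
Canonical Fstar_series_group A i := Group (Fstar_series_group_set A i).

Lemma Fstar_series_normal G i : Fstar_series G i <| G.
Proof.
have cosetpre_Fstar_normal X : X <| G -> coset X @*^-1 Fstar (G / X) <| G.
  by move=> nsXG; rewrite -{2}(quotientGK nsXG) cosetpre_normal gFnormal.
by elim: i => [|i /cosetpre_Fstar_normal]; first exact: normal1.
Qed.

Lemma Fstar_seriesS_eqG G i :
  (Fstar_series G i.+1 == G) = quasinilpotent (G / Fstar_series G i).
Proof.
have nsXG := Fstar_series_normal G i; rewrite Fstar_seriesS /quasinilpotent.
apply/eqP/eqP => [defG | ->]; last exact: quotientGK.
by rewrite -[Fstar _]cosetpreK defG.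
Qed.

Lemma Fstar_series_stable G i : Fstar_series G i = G -> Fstar_series G i.+1 = G.
Proof.
by move=> defG; apply/eqP; rewrite Fstar_seriesS_eqG defG trivg_quotient quasinil1.
Qed.

Lemma Fstar_series_proper G i :
  Fstar_series G i \proper G -> Fstar_series G i \proper Fstar_series G i.+1.
Proof.
set X := Fstar_series G i; have [sXG nXG] := andP (Fstar_series_normal G i).
rewrite Fstar_seriesS properE sub_cosetpre /= -/X => ltXG; apply/negP => sFX.
have /trivgP FGX1 : Fstar (G / X) \subset [1].
  by rewrite -(cosetpreK (Fstar (G / X))) -(trivg_quotient X) quotientS.
by have := proper_subn ltXG; rewrite -quotient_sub1 // subG1 -trivg_Fstar FGX1 eqxx.
Qed.

Lemma Fstar_series_card G i : Fstar_series G i = G \/ i < #|Fstar_series G i|.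
Proof.
elim: i => [|i IHi]; first by right; rewrite cardG_gt0.
have [defG | neXG] := eqVneq (Fstar_series G i) G.
  by left; apply: Fstar_series_stable.
have ltXG : Fstar_series G i \proper G.
  by rewrite properEneq neXG normal_sub ?Fstar_series_normal.
right; case: IHi => [/eqP | ltiX]; first by rewrite (negPf neXG).
exact: leq_ltn_trans ltiX (proper_card (Fstar_series_proper ltXG)).
Qed.

Lemma Fstar_series_at_card G : Fstar_series G #|G| = G.
Proof.
have [// | ltGX] := Fstar_series_card G #|G|.
have := subset_leq_card (normal_sub (Fstar_series_normal G #|G|)).
by rewrite leqNgt ltGX.
Qed.

Lemma cosetpre_Fstar_normalI G N X : N <| G -> X <| G ->
  coset (X :&: N) @*^-1 Fstar (N / (X :&: N)) = coset X @*^-1 Fstar (G / X) :&: N.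
Proof.
move=> nsNG nsXG; have [sNG nNG] := andP nsNG; have [sXG nXG] := andP nsXG.
have nXN := subset_trans sNG nXG.
set P := coset X @*^-1 Fstar (G / X); have sXP : X \subset P := sub_cosetpre _.
have nsYN : X :&: N <| N by rewrite setIC (normalGI sNG nsXG).
have [f injf imf] := second_isom nXN.
have defPN : (P :&: N) / (X :&: N) = Fstar (N / (X :&: N)).
  apply: (injm_morphim_inj injf); rewrite ?quotientS ?subsetIr ?Fstar_sub //.
  rewrite imf ?subsetIr // (injmF _ injf) ?imf // quotientGI // cosetpreK.
  by rewrite /= (Fstar_normalI (quotient_normal X nsNG)).
rewrite -defPN quotientK ?mulSGid ?setSI //.
exact: subset_trans (subsetIr _ _) (normal_norm nsYN).
Qed.

Lemma Fstar_series_normalI G N i : N <| G -> Fstar_series N i = Fstar_series G i :&: N.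
Proof.
move=> nsNG; elim: i => [|i IHi]; first by rewrite /= setI1g.
by rewrite !Fstar_seriesS IHi (cosetpre_Fstar_normalI nsNG (Fstar_series_normal G i)).
Qed.

Lemma hstar_leq G m : (hstar G <= m) = (Fstar_series G m == G).
Proof.
apply: find_iota_leq; last exact/eqP/Fstar_series_at_card.
by move=> i /eqP/Fstar_series_stable->.
Qed.

End FstarSeries.

Section Residual.
Variable gT : finGroupType.
Implicit Types H N : {group gT}.

Canonical qn_residual_group H := Eval hnf in [group of qn_residual H].

Lemma qn_residual_min H N : N <| H -> quasinilpotent (H / N) -> qn_residual H \subset N.
Proof. by move=> nsNH qnHN; apply: bigcap_inf; rewrite nsNH. Qed.

Lemma qn_residual_normal H : qn_residual H <| H.
Proof.
rewrite /normal qn_residual_min ?normal_refl ?trivg_quotient ?quasinil1 //.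
by apply/norms_bigcap/bigcapsP => N /andP[/andP[]].
Qed.

(* A minimal normal subgroup with quasinilpotent quotient lies in every other one,
   by quasinil_quotientI, so it is the residual. *)
Lemma quotient_qn_residual H : quasinilpotent (H / qn_residual H).
Proof.
have [R minR] : {R : {group gT} |
    mingroup R [pred N : {group gT} | (N <| H) && quasinilpotent (H / N)]}.
  by apply: ex_mingroup; exists H; rewrite /= normal_refl trivg_quotient quasinil1.
have [/andP[nsRH qnHR] minRP] := mingroupP minR.
suff -> : qn_residual H = R by [].
apply/eqP; rewrite eqEsubset qn_residual_min //; apply/bigcapsP => N /andP[nsNH qnHN].
rewrite -(minRP (R :&: N)%G) ?subsetIr ?subsetIl //=.
by rewrite normalI // quasinil_quotientI.
Qed.

End Residual.

Unset Implicit Arguments.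

Theorem lemma2 (gT : finGroupType) (H : {group gT}) :
  H :!=: 1 -> hstar (qn_residual H) = (hstar H).-1.
Proof.
move=> ntH; set R := qn_residual_group H.
have nsRH : R <| H := qn_residual_normal H.
have hH_gt0 : 0 < hstar H by rewrite lt0n -leqn0 hstar_leq eq_sym.
have hR_le : hstar R <= (hstar H).-1.
  rewrite hstar_leq (Fstar_series_normalI _ nsRH) -/R; apply/eqP/setIidPr.
  apply: qn_residual_min (Fstar_series_normal H _) _.
  by rewrite -Fstar_seriesS_eqG prednK // -hstar_leq.
have hH_le : hstar H <= (hstar R).+1.
  have sRX : R \subset Fstar_series H (hstar R).
    have /eqP defR : Fstar_series R (hstar R) == R by rewrite -hstar_leq.
    by rewrite -{1}defR (Fstar_series_normalI _ nsRH) subsetIl.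
  rewrite hstar_leq Fstar_seriesS_eqG.
  exact: quasinil_quotientS sRX nsRH (Fstar_series_normal H _) (quotient_qn_residual H).
by apply/eqP; rewrite eqn_leq hR_le -ltnS prednK.
Qed.
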